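(* Let $Q$ be a finite-dimensional real affine space modelled on $V$ (with a norm $\|\cdot\|$ on $V$), $q\in Q$, $n\ge0$, and suppose $f\in A(Q)$ can be written as $$f=\sum_{m=0}^nk^m+r,$$ where each $k^m$ is a homogeneous polynomial of degree $m$ at $q$ and $r$ is a remainder of order $n$ at $q$. Then for $0\le j\le n$ and every $v\in V$, $$k^j(q+v)=\frac1{j!}\mathrm D^jf(q;v).$$
   Context: $k:Q\to\mathbb R$ is a homogeneous polynomial of degree $m$ at $q$ if there is $F:Q\times V^m\to\mathbb R$, linear in each vector argument at the fixed point $q$, with $k(q+v)=\frac1{m!}F(q;v,\dots,v)$ for all $v\in V$. $r$ is a remainder of order $n$ at $q$ if $r(q)=0$ and $\lim_{v\to0}r(q+v)/\|v\|^n=0$. The $j$-th directional derivative is $\mathrm D^jf(q;v)=\lim_{s\to0}s^{-j}\Delta^jf(q;sv)$ with $\Delta^jf(q;w)=(-1)^j\sum_{l=0}^j(-1)^l\binom jl f(q+lw)$. *)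

From HB Require Import structures.
From mathcomp Require Import all_boot all_order all_algebra.
From mathcomp Require Import all_classical all_reals all_analysis.
Set Implicit Arguments. Unset Strict Implicit. Unset Printing Implicit Defensive.
Import Order.TTheory GRing.Theory Num.Theory.
Import numFieldNormedType.Exports.
Local Open Scope classical_set_scope.
Local Open Scope ring_scope.

Definition affine_space (R : realType) (V : normedModType R) (Q : Type)
    (add : Q -> V -> Q) : Prop :=
  [/\ forall q, add q 0 = q,
      forall q v w, add (add q v) w = add q (v + w)
    & forall p p', exists! v, add p v = p'].

Definition finite_dim (R : realType) (V : normedModType R) : Prop :=
  exists (d : nat) (e : 'I_d -> V),
    forall v, exists c : 'I_d -> R, v = \sum_(i < d) c i *: e i.

Definition upd (V : Type) (m : nat) (w : 'I_m -> V) (i : 'I_m) (x : V) :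
  'I_m -> V := fun j => if j == i then x else w j.

Definition multilinear (R : realType) (V : normedModType R) (m : nat)
    (F : ('I_m -> V) -> R) : Prop :=
  forall (w : 'I_m -> V) (i : 'I_m) (a : R) (x y : V),
    F (upd w i (a *: x + y)) = a * F (upd w i x) + F (upd w i y).

Definition homogeneous_at (R : realType) (V : normedModType R) (Q : Type)
    (add : Q -> V -> Q) (m : nat) (q : Q) (k : Q -> R) : Prop :=
  exists F : ('I_m -> V) -> R, multilinear F /\
    forall v : V, k (add q v) = (m`!%:R)^-1 * F (fun _ => v).

Definition remainder_at (R : realType) (V : normedModType R) (Q : Type)
    (add : Q -> V -> Q) (n : nat) (q : Q) (r : Q -> R) : Prop :=
  r q = 0 /\ (fun v : V => r (add q v) / `|v| ^+ n) @ (0 : V)^' --> (0 : R).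

Definition fdiff (R : realType) (V : normedModType R) (Q : Type)
    (add : Q -> V -> Q) (j : nat) (f : Q -> R) (q : Q) (w : V) : R :=
  (-1) ^+ j * \sum_(l < j.+1) (-1) ^+ l * 'C(j, l)%:R * f (add q (l%:R *: w)).

From HB Require Import structures.
From mathcomp Require Import all_boot all_order all_algebra.
From mathcomp Require Import all_classical all_reals all_analysis.
From mathcomp Require Import ring.
Set Implicit Arguments. Unset Strict Implicit. Unset Printing Implicit Defensive.
Import Order.TTheory GRing.Theory Num.Theory.
Import numFieldNormedType.Exports.
Local Open Scope classical_set_scope.
Local Open Scope ring_scope.

(* Writing f = sum_m k^m + r, homogeneity gives k^m(q + l s v) = (l s)^m k^m(q + v),
   so the k^m-part of s^-j Delta^j f(q; s v) is
   (-1)^j s^(m-j) k^m(q + v) sum_l (-1)^l C(j, l) l^m.  This alternating binomial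
   sum vanishes for m < j and equals (-1)^j j! for m = j, while s^(m-j) -> 0 for
   m > j.  The remainder contributes terms s^-j r(q + l s v) = o(|s|^(n-j)), which
   vanish in the limit since j <= n. *)

Section BinomialMoment.
Variable R : comNzRingType.

Definition binomial_moment (j m : nat) : R :=
  \sum_(l < j.+1) (-1) ^+ l * 'C(j, l)%:R * l%:R ^+ m.

Lemma binomial_moment0 j : binomial_moment j.+1 0 = 0.
Proof.
rewrite /binomial_moment [RHS](_ : _ = (-1 + 1) ^+ j.+1); last by rewrite addNr expr0n.
by rewrite exprD1n; apply: eq_bigr => l _; rewrite expr0 mulr1 mulr_natr.
Qed.

Lemma binomial_momentSS j m :
  binomial_moment j.+1 m.+1 =
  - j.+1%:R * \sum_(i < m.+1) 'C(m, i)%:R * binomial_moment j i.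
Proof.
have shift (l : nat) : (-1) ^+ l.+1 * 'C(j.+1, l.+1)%:R * l.+1%:R ^+ m.+1 =
    - j.+1%:R * ((-1) ^+ l * 'C(j, l)%:R * l.+1%:R ^+ m) :> R.
  have bin_diag : j.+1%:R * 'C(j, l)%:R = l.+1%:R * 'C(j.+1, l.+1)%:R :> R.
    by rewrite -!natrM mul_bin_diag.
  transitivity (- (-1) ^+ l * (l.+1%:R * 'C(j.+1, l.+1)%:R) * l.+1%:R ^+ m :> R).
    by rewrite exprS exprSr; ring.
  by rewrite -bin_diag; ring.
rewrite /binomial_moment big_ord_recl expr0n mulr0 add0r.
under eq_bigr => l _ do rewrite shift -[l.+1%:R]natr1 exprD1n.
rewrite -mulr_sumr; congr (_ * _).
under eq_bigr do rewrite mulr_sumr.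
rewrite exchange_big; apply: eq_bigr => i _; rewrite mulr_sumr.
by apply: eq_bigr => l _; rewrite mulr_natr; ring.
Qed.

Lemma binomial_moment_lt j m : (m < j)%N -> binomial_moment j m = 0.
Proof.
elim: j m => [//|j IHj] [_|m]; first exact: binomial_moment0.
rewrite ltnS => ltmj; rewrite binomial_momentSS big1 ?mulr0 // => i _.
by rewrite IHj ?mulr0 // (leq_ltn_trans _ ltmj) // -ltnS.
Qed.

Lemma binomial_moment_diag j : binomial_moment j j = (-1) ^+ j * j`!%:R.
Proof.
elim: j => [|j IHj]; first by rewrite /binomial_moment big_ord1 !expr0 !mul1r.
rewrite binomial_momentSS big_ord_recr /= big1 ?add0r => [|i _]; last first.
  by rewrite binomial_moment_lt ?mulr0.
by rewrite IHj binn factS natrM exprS; ring.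
Qed.
End BinomialMoment.

Section Multilinear.
Variables (R : realType) (V : normedModType R) (m : nat).
Variables (F : ('I_m -> V) -> R) (F_multilinear : multilinear F).

Lemma multilinear_upd0 w i : F (upd w i 0) = 0.
Proof.
have := F_multilinear w i 1 0 0.
rewrite scaler0 addr0 mul1r => double.
by apply: (@addrI _ (F (upd w i 0))); rewrite addr0 -double.
Qed.

Lemma multilinear_updZ w i t x : F (upd w i (t *: x)) = t * F (upd w i x).
Proof.
by have := F_multilinear w i t x 0; rewrite addr0 multilinear_upd0 addr0.
Qed.

Lemma multilinear_diagZ t v : F (fun=> t *: v) = t ^+ m * F (fun=> v).
Proof.
pose w p (i : 'I_m) := if (i < p)%N then t *: v else v.
have wS p (lt_pm : (p < m)%N) : w p.+1 = upd (w p) (Ordinal lt_pm) (t *: v).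
  apply: funext => i; rewrite /w /upd ltnS leq_eqVlt -val_eqE /=.
  by case: eqP => // ->.
have w_upd p (lt_pm : (p < m)%N) : upd (w p) (Ordinal lt_pm) v = w p.
  by apply: funext => i; rewrite /w /upd -val_eqE /=; case: eqP => // ->; rewrite ltnn.
have Fw p : (p <= m)%N -> F (w p) = t ^+ p * F (w 0%N).
  elim: p => [|p IHp] lt_pm; first by rewrite mul1r.
  by rewrite (wS _ lt_pm) multilinear_updZ w_upd IHp ?exprS ?mulrA // ltnW.
have -> : (fun=> t *: v) = w m by apply: funext => i; rewrite /w ltn_ord.
by rewrite Fw //; congr (_ * F _); apply: funext => i; rewrite /w ltn0.
Qed.
End Multilinear.

Lemma homogeneous_atZ (R : realType) (V : normedModType R) (Q : Type)
    (add : Q -> V -> Q) (m : nat) (q : Q) (k : Q -> R) :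
  homogeneous_at add m q k ->
  forall t v, k (add q (t *: v)) = t ^+ m * k (add q v).
Proof. by move=> [F [F_multilinear kF]] t v; rewrite !kF multilinear_diagZ //; ring. Qed.

Section FiniteDifference.
Variables (R : realType) (V : normedModType R) (Q : Type) (add : Q -> V -> Q).

Lemma fdiffD j (f g : Q -> R) q w :
  fdiff add j (fun p => f p + g p) q w = fdiff add j f q w + fdiff add j g q w.
Proof.
by rewrite /fdiff -mulrDr -big_split; congr (_ * _); apply: eq_bigr => l _; rewrite mulrDr.
Qed.

Lemma fdiff_sum (I : finType) j (F : I -> Q -> R) q w :
  fdiff add j (fun p => \sum_i F i p) q w = \sum_i fdiff add j (F i) q w.
Proof.
rewrite /fdiff -mulr_sumr exchange_big /=; congr (_ * _).
by apply: eq_bigr => l _; rewrite mulr_sumr.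
Qed.

Lemma fdiff_homogeneous j m q (k : Q -> R) (s : R) v :
  homogeneous_at add m q k ->
  fdiff add j k q (s *: v) = (-1) ^+ j * binomial_moment R j m * s ^+ m * k (add q v).
Proof.
move=> k_hom; rewrite /fdiff /binomial_moment -!mulrA mulr_suml; congr (_ * _).
by apply: eq_bigr => l _; rewrite scalerA (homogeneous_atZ k_hom) exprMn; ring.
Qed.

Lemma homogeneous_fdiff_cvg j m q (k : Q -> R) v :
  homogeneous_at add m q k ->
  s ^- j * fdiff add j k q (s *: v) @[s --> (0 : R)^'] -->
    (if m == j then j`!%:R * k (add q v) else 0).
Proof.
move=> k_hom; under eq_fun do rewrite (fdiff_homogeneous _ _ _ k_hom).
have [lt_mj|le_jm] := ltnP m j.
  rewrite binomial_moment_lt // (ltn_eqF lt_mj).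
  under eq_fun do rewrite mulr0 !mul0r mulr0.
  exact: cvg_cst.
pose c := (-1) ^+ j * binomial_moment R j m * k (add q v).
have -> : (if m == j then j`!%:R * k (add q v) else 0) = c * 0 ^+ (m - j).
  rewrite expr0n subn_eq0 (_ : (m <= j)%N = (m == j)); last by rewrite eqn_leq le_jm andbT.
  case: eqP => [eq_mj|_]; last by rewrite mulr0.
  by rewrite mulr1 /c eq_mj binomial_moment_diag signrMK.
have c_cvg : c * s ^+ (m - j) @[s --> (0 : R)^'] --> c * 0 ^+ (m - j).
  apply: cvgMl_tmp; apply/(continuous_withinNx (fun s : R => s ^+ (m - j))).
  exact: exprn_continuous.
apply: cvg_trans c_cvg; apply: near_eq_cvg; near=> s.
have s_neq0 : s != 0 by near: s; exact: nbhs_dnbhs_neq.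
have -> : s ^+ m = s ^+ (m - j) * s ^+ j by rewrite -exprD subnK.
by rewrite /c; field; rewrite expf_neq0.
Unshelve. all: by end_near.
Qed.
End FiniteDifference.

Section Remainder.
Variables (R : realType) (V : normedModType R) (Q : Type) (add : Q -> V -> Q).
Variables (q : Q) (n : nat) (r : Q -> R).
Hypotheses (add_q0 : add q 0 = q) (r_rem : remainder_at add n q r).

Lemma remainder_at_factor :
  exists2 rho : V -> R, rho @ (0 : V) --> (0 : R) &
    forall w, r (add q w) = `|w| ^+ n * rho w.
Proof.
have [rq0 r_cvg] := r_rem.
pose rho w := r (add q w) / `|w| ^+ n.
have rho0 : rho 0 = 0 by rewrite /rho add_q0 rq0 mul0r.
exists rho.
  by rewrite -rho0; apply/continuous_withinNx; rewrite rho0.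
move=> w; have [->|w_neq0] := eqVneq w 0; first by rewrite rho0 mulr0 add_q0.
by rewrite /rho mulrC divfK // expf_neq0 // normr_eq0.
Qed.

Lemma remainder_scaled_cvg0 j w : (j <= n)%N ->
  s ^- j * r (add q (s *: w)) @[s --> (0 : R)^'] --> 0.
Proof.
move=> le_jn; have [rho rho_cvg r_rho] := remainder_at_factor.
apply: norm_cvg0.
have rho_sw : rho (s *: w) @[s --> (0 : R)] --> 0.
  apply: cvg_comp rho_cvg; rewrite -(scale0r w); apply: cvgZr_tmp; exact: cvg_id.
have pow_cvg : `|s| ^+ (n - j) @[s --> (0 : R)] --> `|0 : R| ^+ (n - j).
  apply: (@cvg_comp _ _ _ Num.norm (fun x => x ^+ (n - j))).
    exact: cvg_norm cvg_id.
  exact: exprn_continuous.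
have bound_cvg : `|w| ^+ n * (`|s| ^+ (n - j) * `|rho (s *: w)|) @[s --> (0 : R)]
    --> `|w| ^+ n * (`|0 : R| ^+ (n - j) * `|0 : R|).
  exact: cvgMl_tmp (cvgM pow_cvg (cvg_norm rho_sw)).
rewrite normr0 !mulr0 in bound_cvg.
apply: cvg_trans (cvg_within_filter _ bound_cvg); apply: near_eq_cvg; near=> s.
have s_neq0 : s != 0 by near: s; exact: nbhs_dnbhs_neq.
rewrite r_rho !normrM normfV !normrX normr_id normrZ exprMn.
have -> : `|s| ^+ n = `|s| ^+ (n - j) * `|s| ^+ j by rewrite -exprD subnK.
by field; rewrite expf_neq0 // normr_eq0.
Unshelve. all: by end_near.
Qed.

Lemma remainder_fdiff_cvg0 j v : (j <= n)%N ->
  s ^- j * fdiff add j r q (s *: v) @[s --> (0 : R)^'] --> 0.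
Proof.
move=> le_jn.
pose c (l : 'I_j.+1) : R := (-1) ^+ j * (-1) ^+ l * 'C(j, l)%:R.
have -> : (fun s => s ^- j * fdiff add j r q (s *: v)) =
    (fun s => \sum_(l < j.+1) c l * (s ^- j * r (add q (s *: (l%:R *: v))))).
  apply: funext => s; rewrite /fdiff mulrCA !mulr_sumr; apply: eq_bigr => l _.
  by rewrite !scalerA [s * _]mulrC /c; ring.
rewrite -[X in _ --> X](_ : \sum_(l < j.+1) c l * 0 = 0); last first.
  by rewrite big1 // => l _; rewrite mulr0.
apply: cvg_big => [|l _]; first exact: add_continuous.
exact: cvgMl_tmp (remainder_scaled_cvg0 _ le_jn).
Qed.
End Remainder.

Theorem proposition14 (R : realType) (V : normedModType R) (Q : Type)
    (add : Q -> V -> Q) (q : Q) (n : nat) (f : Q -> R)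
    (k : nat -> Q -> R) (r : Q -> R) :
  affine_space add -> finite_dim V ->
  (forall m, (m <= n)%N -> homogeneous_at add m q (k m)) ->
  remainder_at add n q r ->
  (forall p, f p = \sum_(m < n.+1) k m p + r p) ->
  forall j, (j <= n)%N -> forall v : V,
    (fun s : R => s ^- j * fdiff add j f q (s *: v)) @ (0 : R)^'
      --> (j`!%:R * k j (add q v)).
Proof.
move=> [add_q0 _ _] _ k_hom r_rem f_def j le_jn v.
rewrite (_ : f = fun p => \sum_(m < n.+1) k m p + r p); last exact: funext.
have -> : (fun s => s ^- j * fdiff add j (fun p => \sum_(m < n.+1) k m p + r p) q (s *: v))
    = (fun s => \sum_(m < n.+1) s ^- j * fdiff add j (k m) q (s *: v)
                + s ^- j * fdiff add j r q (s *: v)).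
  by apply: funext => s; rewrite fdiffD fdiff_sum mulrDr mulr_sumr.
have rem_cvg := remainder_fdiff_cvg0 (add_q0 q) r_rem v le_jn.
suff hom_cvg : \sum_(m < n.+1) s ^- j * fdiff add j (k m) q (s *: v)
    @[s --> (0 : R)^'] --> j`!%:R * k j (add q v).
  by rewrite -(addr0 (j`!%:R * _)); exact: cvgD hom_cvg rem_cvg.
have lt_jn1 : (j < n.+1)%N by [].
rewrite -(@big_pred1_eq R 0 +%R _ (Ordinal lt_jn1) (fun m : 'I_n.+1 => j`!%:R * k m (add q v))).
rewrite big_mkcond /=.
apply: cvg_big => [|m _]; first exact: add_continuous.
by apply/homogeneous_fdiff_cvg/k_hom; rewrite -ltnS ltn_ord.
Qed.
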